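(* Let $K,L,T$ be positive integers and $\lambda=\min\{K,L\}+T$. Let indices range over $r\in\{1,\ldots,K+T\}$, $c\in\{1,\ldots,L+T\}$, $e\in\mathbb{Z}_{\ge0}$. Then $\operatorname{N}(K,L,T)$ equals the optimal value of the binary linear program in the variables $U_e,R_{r,e},C_{c,e},M_{r,c,e}\in\{0,1\}$: minimize $\sum_e U_e$ subject to $M_{r,c,e}\le U_e$ for all $r,c,e$; $\sum_{(r,c)\neq(r',c')}M_{r,c,e}\le\lambda(1-M_{r',c',e})$ for all $e$, all $r'\le K$, $c'\le L$; $\sum_r R_{r,e}\le 1$ for all $e$; $\sum_c C_{c,e}\le1$ for all $e$; $\sum_e M_{r,c,e}=1$ for all $r,c$; $\sum_e R_{r,e}=1$ for all $r$; $\sum_e C_{c,e}=1$ for all $c$; $\sum_e e\,M_{r,c,e}=\sum_e e\,R_{r,e}+\sum_e e\,C_{c,e}$ for all $r,c$.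
   Context: A degree table with parameters $K,L,T$ is a tuple $(\alpha_{\mathrm p},\alpha_{\mathrm s},\beta_{\mathrm p},\beta_{\mathrm s})$ of nonnegative integer vectors of lengths $K,T,L,T$ such that, with $\alpha=(\alpha_{\mathrm p}\mid\alpha_{\mathrm s})$ (length $K+T$) and $\beta=(\beta_{\mathrm p}\mid\beta_{\mathrm s})$ (length $L+T$): (i) entries of $\alpha$ are distinct; (ii) entries of $\beta$ are distinct; (iii) for every integer $n\in\operatorname{Set}(\alpha_{\mathrm p})+\operatorname{Set}(\beta_{\mathrm p})$ there is a unique $i\in\operatorname{Set}(\alpha)$ and unique $j\in\operatorname{Set}(\beta)$ with $n=i+j$. $\operatorname{Set}(v)$ is the set of entries of $v$, $A+B=\{a+b\}$, $\operatorname{N}(\alpha,\beta)=|\operatorname{Set}(\alpha)+\operatorname{Set}(\beta)|$, and $\operatorname{N}(K,L,T)$ is the minimum of $\operatorname{N}(\alpha,\beta)$ over all degree tables with parameters $K,L,T$. *)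

From mathcomp Require Import all_boot.
Set Implicit Arguments. Unset Strict Implicit. Unset Printing Implicit Defensive.

(* Degree tables: vectors are sequences of natural numbers; alpha = ap ++ as_,
   beta = bp ++ bs. *)
Definition degree_table (K L T : nat) (ap as_ bp bs : seq nat) : Prop :=
  size ap = K /\ size as_ = T /\ size bp = L /\ size bs = T /\
      uniq (ap ++ as_) /\ uniq (bp ++ bs) /\
      forall n : nat,
        (exists a b, a \in ap /\ b \in bp /\ n = a + b) ->
        exists! ij : nat * nat,
          ij.1 \in ap ++ as_ /\ ij.2 \in bp ++ bs /\ n = ij.1 + ij.2.

Definition Nab (alpha beta : seq nat) : nat :=
  size (undup [seq a + b | a <- alpha, b <- beta]).

Definition DT_value (K L T v : nat) : Prop :=
  exists ap as_ bp bs, degree_table K L T ap as_ bp bs /\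
    v = Nab (ap ++ as_) (bp ++ bs).

Definition is_min (P : nat -> Prop) (v : nat) : Prop :=
  P v /\ forall w, P w -> v <= w.

(* Feasibility of the binary LP.  Row index r : 'I_(K+T) (0-based, so r' <= K
   becomes r' < K), column index c : 'I_(L+T), e : nat.  All variables vanish
   for e >= B, and sums over e are over e < B. *)
Definition LP_feasible (K L T B : nat) (U : nat -> bool)
  (R : 'I_(K + T) -> nat -> bool) (C : 'I_(L + T) -> nat -> bool)
  (M : 'I_(K + T) -> 'I_(L + T) -> nat -> bool) : Prop :=
  let lam := minn K L + T in
  (forall e, B <= e ->
         [/\ U e = false, (forall r, R r e = false), (forall c, C c e = false)
           & (forall r c, M r c e = false)]) /\
      (forall r c e, M r c e <= U e) /\
      (forall e (r' : 'I_(K + T)) (c' : 'I_(L + T)), r' < K -> c' < L ->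
         \sum_(p : 'I_(K + T) * 'I_(L + T) | p != (r', c')) (M p.1 p.2 e : nat)
           <= lam * (1 - M r' c' e)) /\
      (forall e, \sum_(r : 'I_(K + T)) (R r e : nat) <= 1) /\
      (forall e, \sum_(c : 'I_(L + T)) (C c e : nat) <= 1) /\
      (forall r c, \sum_(e < B) (M r c e : nat) = 1) /\
      (forall r, \sum_(e < B) (R r e : nat) = 1) /\
      (forall c, \sum_(e < B) (C c e : nat) = 1) /\
      (forall r c, \sum_(e < B) e * M r c e
                   = \sum_(e < B) e * R r e + \sum_(e < B) e * C c e).

Definition LP_value (K L T v : nat) : Prop :=
  exists B U R C M, @LP_feasible K L T B U R C M /\ v = \sum_(e < B) (U e : nat).

(* A degree table is the same thing as a pair of injective maps [a], [b] on the
   row and column indices such that every primary sum [a r + b c] (r < K, c < L)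
   has a unique representation.  Such a pair yields a feasible LP solution by
   taking R, C, M to be the indicators of [a r], [b c], [a r + b c] and U the
   indicator of the sumset; the objective is then N(alpha, beta), and the
   lambda-constraint holds because, by injectivity, at most min(K + T, L + T)
   index pairs share a sum.  Conversely the positions [a r], [b c] of the ones
   in the one-hot rows R r, C c of a feasible solution define such a pair: the
   weighted-sum constraint makes M r c the indicator of [a r + b c], the
   lambda-constraint then isolates primary sums, and M <= U puts the sumset
   inside the support of U. *)

From mathcomp Require Import all_boot.
From Stdlib Require Import Classical.

Set Implicit Arguments.
Unset Strict Implicit.
Unset Printing Implicit Defensive.

Lemma is_min_exists (P : nat -> Prop) : (exists n, P n) -> exists v, is_min P v.
Proof.
move=> [n Pn]; elim/ltn_ind: n Pn => n IH Pn.
have [[w [lt_wn Pw]] | no_smaller] := classic (exists w, w < n /\ P w).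
  exact: IH lt_wn Pw.
exists n; split=> // w Pw; rewrite leqNgt; apply/negP => lt_wn.
by apply: no_smaller; exists w.
Qed.

Lemma sum_bool_card (I : finType) (f : pred I) : \sum_i (f i : nat) = #|f|.
Proof.
by rewrite -sum1_card [RHS]big_mkcond; apply: eq_bigr => i _; rewrite unfold_in; case: (f i).
Qed.

Lemma sum_bool_le1P (I : finType) (f : pred I) :
  reflect {in f &, forall i j, i = j} (\sum_i (f i : nat) <= 1).
Proof.
by rewrite sum_bool_card; apply: (iffP card_le1_eqP) => eq_f i j fi fj; apply/esym/eq_f.
Qed.

Lemma sum_bool_iota B (U : pred nat) :
  \sum_(e < B) (U e : nat) = size [seq e <- iota 0 B | U e].
Proof.
rewrite size_filter -sum1_count [RHS]big_mkcond -(big_mkord xpredT (fun e => U e : nat)).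
by rewrite /index_iota subn0; apply: eq_bigr => e _; case: (U e).
Qed.

Lemma sum_mul_indicator B (F : nat -> nat) x :
  x < B -> \sum_(e < B) F e * (x == e) = F x.
Proof.
move=> lt_xB; have := big_ord1_eq addn F x B; rewrite lt_xB => <-.
rewrite [RHS]big_mkcond /=.
by apply: eq_bigr => e _; rewrite eq_sym; case: eqP; rewrite ?muln1 ?muln0.
Qed.

Lemma sum_indicator B x : x < B -> \sum_(e < B) (x == e : nat) = 1.
Proof.
move=> lt_xB; rewrite -(sum_mul_indicator (fun=> 1) lt_xB).
by under [RHS]eq_bigr do rewrite mul1n.
Qed.

Lemma sum_weighted_indicator B x : x < B -> \sum_(e < B) e * (x == e) = x.
Proof. exact: sum_mul_indicator. Qed.

Lemma one_hotE B (f : pred nat) :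
  (forall e, B <= e -> f e = false) -> \sum_(e < B) (f e : nat) = 1 ->
  forall e, f e = (e == \sum_(e < B) e * f e).
Proof.
move=> f_out /eqP /sum_nat_eq1 [i [_ fi f_other]].
have fE e : f e = (i == e :> nat).
  have [lt_eB | le_Be] := ltnP e B.
    2: by rewrite f_out // ltn_eqF // (leq_trans (ltn_ord i)).
  have [<- | ne_ie] := eqVneq (i : nat) e; first by case: (f i) fi.
  have ne_ei : Ordinal lt_eB != i by rewrite -val_eqE eq_sym.
  by move: (f_other _ ne_ei isT) => /=; case: (f e).
move=> e; rewrite (eq_bigr (fun e : 'I_B => e * (i == e :> nat))) => [|e' _].
  by rewrite sum_weighted_indicator // fE eq_sym.
by rewrite fE.
Qed.

Lemma sum_pairs_eq_le_min (I J : finType) (a : I -> nat) (b : J -> nat) e :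
  injective a -> injective b ->
  \sum_(p : I * J) (a p.1 + b p.2 == e : nat) <= minn #|I| #|J|.
Proof.
move=> inj_a inj_b; rewrite -(pair_big xpredT xpredT (fun i j => (a i + b j == e : nat))) /=.
rewrite leq_min; apply/andP; split.
  rewrite -sum1_card; apply: leq_sum => i _; apply/sum_bool_le1P => j j' /eqP ej /eqP ej'.
  by apply: inj_b; apply/eqP; rewrite -(eqn_add2l (a i)) ej ej'.
rewrite exchange_big -sum1_card; apply: leq_sum => j _.
apply/sum_bool_le1P => i i' /eqP ei /eqP ei'.
by apply: inj_a; apply/eqP; rewrite -(eqn_add2r (b j)) ei ei'.
Qed.

Definition degree_map K L T (a : 'I_(K + T) -> nat) (b : 'I_(L + T) -> nat) : Prop :=
  [/\ injective a, injective b &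
      forall r c (r' : 'I_(K + T)) (c' : 'I_(L + T)),
        r' < K -> c' < L -> a r + b c = a r' + b c' -> (r, c) = (r', c')].

Lemma codom_nth n (T' : Type) (x0 : T') (s : seq T') :
  size s = n -> codom (fun i : 'I_n => nth x0 s i) = s.
Proof.
by move=> <-; rewrite codomE (map_comp (nth x0 s) val) val_enum_ord -/(mkseq _ _) mkseq_nth.
Qed.

Lemma mem_take_codom n k (T' : eqType) (a : 'I_n -> T') x :
  reflect (exists2 r : 'I_n, r < k & x = a r) (x \in take k (codom a)).
Proof.
have mem_take_enum (r : 'I_n) : (r \in take k (enum 'I_n)) = (r < k).
  by rewrite in_take ?mem_enum // index_enum_ord.
rewrite codomE -map_take; apply: (iffP mapP) => [[r] | [r]].
  by rewrite mem_take_enum; exists r.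
by exists r; rewrite ?mem_take_enum.
Qed.

Lemma degree_tableP K L T (a : 'I_(K + T) -> nat) (b : 'I_(L + T) -> nat) :
  degree_table K L T (take K (codom a)) (drop K (codom a))
                     (take L (codom b)) (drop L (codom b)) <-> degree_map a b.
Proof.
rewrite /degree_table /degree_map !cat_take_drop !size_takel ?size_drop ?size_codom ?card_ord
        ?addKn ?leq_addr //.
split=> [[_ [_ [_ [_ [uniq_a [uniq_b unique_sum]]]]]] | [inj_a inj_b unique_sum]].
  have inj_a : injective a by apply/injectiveP.
  have inj_b : injective b by apply/injectiveP.
  split=> // r c r' c' lt_r'K lt_c'L eq_sum.
  have [|[x y] [_ uniq_xy]] := unique_sum (a r' + b c').
    exists (a r'), (b c').
    by split; [apply/mem_take_codom; exists r' | split; [apply/mem_take_codom; exists c' |]].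
  have E1 := uniq_xy (a r, b c) (conj (codom_f a r) (conj (codom_f b c) (esym eq_sum))).
  have E2 := uniq_xy (a r', b c') (conj (codom_f a r') (conj (codom_f b c') erefl)).
  by move: E2; rewrite E1 => -[/inj_a -> /inj_b ->].
do 6?split => //; [exact/injectiveP | exact/injectiveP |].
move=> n [x [y [/mem_take_codom [r' lt_r'K ->] [/mem_take_codom [c' lt_c'L ->] ->]]]].
exists (a r', b c'); split; first by split; rewrite ?codom_f.
move=> [x' y'] /= [/codomP [r ->] [/codomP [c ->] /= eq_sum]].
by case: (unique_sum r c r' c' lt_r'K lt_c'L (esym eq_sum)) => -> ->.
Qed.

Lemma DT_valueE K L T v :
  DT_value K L T v <->
  exists a b, @degree_map K L T a b /\ v = Nab (codom a) (codom b).
Proof.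
split=> [[ap [as_ [bp [bs [dt ->]]]]] | [a [b [deg_ab ->]]]].
  have [size_ap [size_as [size_bp [size_bs _]]]] := dt.
  pose a (r : 'I_(K + T)) := nth 0 (ap ++ as_) r.
  pose b (c : 'I_(L + T)) := nth 0 (bp ++ bs) c.
  have codom_a : codom a = ap ++ as_ by rewrite codom_nth // size_cat size_ap size_as.
  have codom_b : codom b = bp ++ bs by rewrite codom_nth // size_cat size_bp size_bs.
  exists a, b; split; last by rewrite codom_a codom_b.
  apply/degree_tableP.
  by rewrite codom_a codom_b !take_size_cat // !drop_size_cat.
exists (take K (codom a)), (drop K (codom a)), (take L (codom b)), (drop L (codom b)).
by rewrite !cat_take_drop; split=> //; apply/degree_tableP.
Qed.

Lemma size_undup_le_sum (S : seq nat) B (U : pred nat) :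
  {subset S <= [pred e | U e && (e < B)]} -> size (undup S) <= \sum_(e < B) (U e : nat).
Proof.
move=> S_sub; rewrite sum_bool_iota; apply: uniq_leq_size (undup_uniq S) _ => x.
by rewrite mem_undup mem_filter mem_iota => /S_sub /andP [-> ->].
Qed.

Lemma sum_mem_size_undup (S : seq nat) B :
  {subset S <= gtn B} -> \sum_(e < B) ((e : nat) \in S : nat) = size (undup S).
Proof.
move=> S_lt; rewrite sum_bool_iota; apply/perm_size/uniq_perm.
- exact: filter_uniq (iota_uniq 0 B).
- exact: undup_uniq.
by move=> x; rewrite mem_filter mem_undup mem_iota andb_idr // => /S_lt.
Qed.

Lemma LP_value_of_degree_map K L T a b :
  @degree_map K L T a b -> LP_value K L T (Nab (codom a) (codom b)).
Proof.
move=> [inj_a inj_b unique_sum].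
set S := [seq x + y | x <- codom a, y <- codom b].
pose B := (\max_r a r + \max_c b c).+1.
have lt_a_B r : a r < B by rewrite ltnS (leq_trans (leq_bigmax r)) ?leq_addr.
have lt_b_B c : b c < B by rewrite ltnS (leq_trans (leq_bigmax c)) ?leq_addl.
have lt_ab_B r c : a r + b c < B by rewrite ltnS leq_add // leq_bigmax.
have mem_S r c : a r + b c \in S by apply: allpairs_f; apply: codom_f.
have S_lt_B : {subset S <= gtn B}.
  by move=> _ /allpairsP [[_ _] /= [/codomP [r ->] /codomP [c ->] ->]]; apply: lt_ab_B.
exists B, (fun e => e \in S), (fun r e => a r == e), (fun c e => b c == e),
  (fun r c e => a r + b c == e).
split; last by rewrite sum_mem_size_undup.
split.
  move=> e le_Be; have out x : x < B -> (x == e) = false.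
    by move=> lt_xB; rewrite ltn_eqF // (leq_trans lt_xB).
  split=> [|r|c|r c].
  - by apply/negbTE/negP => /S_lt_B; rewrite unfold_in /= ltnNge le_Be.
  - exact: out (lt_a_B r).
  - exact: out (lt_b_B c).
  - exact: out (lt_ab_B r c).
split; first by move=> r c e; case: eqP => // <-; rewrite mem_S.
split.
  move=> e r' c' lt_r'K lt_c'L.
  have [<- | _] := eqVneq (a r' + b c') e.
    rewrite subnn muln0 leqn0; apply/eqP/big1 => -[r c] /= ne_rc; apply/eqP; rewrite eqb0.
    by apply: contraNN ne_rc => /eqP /unique_sum ->.
  rewrite subn0 muln1; apply: leq_trans (_ : _ <= \sum_p (a p.1 + b p.2 == e : nat)) _.
    by rewrite [leqRHS](bigD1 (r', c')) //= leq_addl.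
  by have := sum_pairs_eq_le_min e inj_a inj_b; rewrite !card_ord addn_minl.
split.
  move=> e; apply/sum_bool_le1P => r r'; rewrite !unfold_in => /eqP ar /eqP ar'.
  by apply: inj_a; rewrite ar ar'.
split.
  move=> e; apply/sum_bool_le1P => c c'; rewrite !unfold_in => /eqP bc /eqP bc'.
  by apply: inj_b; rewrite bc bc'.
do 3?split=> *; rewrite ?sum_indicator //.
by rewrite !sum_weighted_indicator.
Qed.

Lemma degree_map_of_LP_value K L T v :
  LP_value K L T v ->
  exists a b, @degree_map K L T a b /\ Nab (codom a) (codom b) <= v.
Proof.
case=> B [U [R [C [M [[vanish [M_le_U [M_isolated [R_le1 [C_le1 rest]]]]] ->]]]]].
case: rest => M_one [R_one [C_one M_sum]].
pose a r := \sum_(e < B) e * R r e.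
pose b c := \sum_(e < B) e * C c e.
have R_E r e : R r e = (e == a r) by apply: one_hotE (R_one r) e => e' /vanish [].
have C_E c e : C c e = (e == b c) by apply: one_hotE (C_one c) e => e' /vanish [].
have M_E r c e : M r c e = (e == a r + b c).
  by rewrite (one_hotE _ (M_one r c)) ?M_sum // => e' /vanish [].
have inj_a : injective a.
  move=> r r' eq_a; move/sum_bool_le1P: (R_le1 (a r)); apply; rewrite unfold_in R_E ?eq_a //.
have inj_b : injective b.
  move=> c c' eq_b; move/sum_bool_le1P: (C_le1 (b c)); apply; rewrite unfold_in C_E ?eq_b //.
exists a, b; split.
  split=> // r c r' c' lt_r'K lt_c'L eq_sum.
  have := M_isolated (a r' + b c') r' c' lt_r'K lt_c'L.
  rewrite M_E eqxx subnn muln0 leqn0 sum_nat_eq0 => /forall_inP isolated.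
  have [// | /isolated] := eqVneq (r, c) (r', c').
  by rewrite M_E eq_sum eqxx.
rewrite /Nab; apply: size_undup_le_sum => s /allpairsP [[x y] /=].
move=> [/codomP [r ->] /codomP [c ->] ->].
have M_rc : M r c (a r + b c) by rewrite M_E.
rewrite inE; apply/andP; split.
  by have := M_le_U r c (a r + b c); rewrite M_rc; case: (U _).
by rewrite ltnNge; apply/negP => /vanish [_ _ _ /(_ r c)]; rewrite M_rc.
Qed.

Lemma degree_map_exists K L T :
  0 < K + T -> @degree_map K L T (fun r => r) (fun c => c * (K + T)).
Proof.
move=> KT_gt0; have inj_b : injective (fun c : 'I_(L + T) => c * (K + T)).
  by move=> c c' /eqP; rewrite eqn_pmul2r // => /eqP /val_inj.
split=> //; first exact: val_inj.
move=> r c r' c' _ _ eq_sum.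
have eq_r : r = r'.
  (* the sum is a two-digit numeral in base K + T with low digit r *)
  apply: val_inj; move/(congr1 (modn^~ (K + T))): eq_sum.
  by rewrite /= !(addnC (nat_of_ord _)) !modnMDl !modn_small.
by move: eq_sum; rewrite eq_r => /addnI /inj_b ->.
Qed.

Lemma DT_value_exists K L T : 0 < K + T -> exists v, DT_value K L T v.
Proof.
move=> KT_gt0; eexists; apply/DT_valueE.
by do 2 eexists; split; first exact: degree_map_exists.
Qed.

Theorem theorem9 (K L T : nat) (hK : 0 < K) (hL : 0 < L) (hT : 0 < T) :
  exists v : nat, is_min (DT_value K L T) v /\ is_min (LP_value K L T) v.
Proof.
have [v [DT_v v_min]] := is_min_exists (DT_value_exists L (ltn_addr T hK)).
exists v; split=> //; split.
  by have /DT_valueE [a [b [deg_ab ->]]] := DT_v; apply: LP_value_of_degree_map.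
move=> w /degree_map_of_LP_value [a [b [deg_ab le_w]]].
by apply: leq_trans le_w; apply: v_min; apply/DT_valueE; exists a, b.
Qed.
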